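(* Let $\mathcal{P}$ be a poset with at least two elements having the Unique Cover Twin Property, let $n\ge 3$, and let $\mathcal{F}$ be an induced-$\mathcal{P}$-saturated family in $\mathcal{B}_n$. If there exist distinct $x,y\in[n]$ such that no $F\in\mathcal{F}$ satisfies $|F\cap\{x,y\}|=1$, then $\{x,y\}\subseteq F$ for all $F\in\mathcal{F}$.
   Context: In a poset $(P,\le)$, $y$ covers $x$ if $x<y$ and there is no $z$ with $x<z<y$. A poset $\mathcal{P}=(P,\le)$ has the Unique Cover Twin Property (UCTP) if for every $S\in P$ that has exactly one cover $T\in P$, there exists $S'\in P$ with $S'\ne S$ such that $T$ also covers $S'$. $\mathcal{B}_n$ denotes the Boolean lattice $(2^{[n]},\subseteq)$. A family $\mathcal{F}\subseteq 2^{[n]}$ (ordered by inclusion) is induced-$\mathcal{P}$-saturated if it contains no induced copy of $\mathcal{P}$ (an injection $f$ with $u\le v\iff f(u)\subseteq f(v)$) but every family $\mathcal{F}'$ with $\mathcal{F}\subsetneq\mathcal{F}'\subseteq 2^{[n]}$ contains one. *)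

From mathcomp Require Import all_boot all_order.
Set Implicit Arguments. Unset Strict Implicit. Unset Printing Implicit Defensive.
Import Order.TTheory.
Local Open Scope order_scope.

Definition covers (d : Order.disp_t) (P : finPOrderType d) (x y : P) : Prop :=
  x < y /\ ~ (exists z : P, x < z /\ z < y).

Definition UCTP (d : Order.disp_t) (P : finPOrderType d) : Prop :=
  forall S T : P,
    (forall T' : P, covers S T' <-> T' = T) ->
    exists S' : P, S' <> S /\ covers S' T.

Definition has_induced_copy (d : Order.disp_t) (P : finPOrderType d) (n : nat)
    (F : {set {set 'I_n}}) : Prop :=
  exists f : P -> {set 'I_n},
    injective f /\ (forall u, f u \in F) /\
    (forall u v : P, u <= v <-> f u \subset f v).

Definition induced_saturated (d : Order.disp_t) (P : finPOrderType d) (n : nat)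
    (F : {set {set 'I_n}}) : Prop :=
  ~ has_induced_copy P F /\
  (forall F' : {set {set 'I_n}}, F \proper F' -> has_induced_copy P F').

(* Suppose some member of F avoids x (hence also y) and let A0 be a largest
   such member; put G := x |: A0.  Every member of F below G lies below A0 (a
   member containing x contains y, and y is not in G), and every member of F
   strictly above A0 contains x, hence lies above G.  So G is an order twin
   of A0 relative to F, sitting just above it.  By saturation F plus G has an
   induced copy of P.  If the copy misses A0 we may swap G for A0 and get a
   copy inside F.  Otherwise the preimage w of A0 is covered by the preimage
   u of G and by nothing else, while every element below u is below w; so u
   covers only w, contradicting the Unique Cover Twin Property. *)
From mathcomp Require Import all_boot all_order.
Set Implicit Arguments. Unset Strict Implicit. Unset Printing Implicit Defensive.
Import Order.TTheory.
Local Open Scope order_scope.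

Lemma setI_pair_single (T : finType) (B : {set T}) (a b : T) :
  a \in B -> b \notin B -> B :&: [set a; b] = [set a].
Proof.
move=> aB bB; apply/setP=> z; rewrite !inE.
case: (eqVneq z a) => [->|_]; first by rewrite aB.
by case: (eqVneq z b) => [->|_]; rewrite ?(negbTE bB) ?andbF.
Qed.

Lemma mem_pair_eq_of_card_setI (T : finType) (B : {set T}) (a b : T) :
  #|B :&: [set a; b]| <> 1%N -> (a \in B) = (b \in B).
Proof.
move=> hB; case aB: (a \in B); case bB: (b \in B) => //; case: hB.
- by rewrite setI_pair_single ?cards1 ?bB.
- by rewrite setUC setI_pair_single ?cards1 ?aB.
Qed.

Lemma UCTP_no_isolated_cover (d : Order.disp_t) (P : finPOrderType d) (w u : P) :
  UCTP P -> w < u ->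
  (forall z, w < z -> u <= z) -> (forall z, z < u -> z <= w) -> False.
Proof.
move=> uctp wu above below.
have cover_wu : covers w u.
  by split=> // -[z [/above uz zu]]; rewrite (lt_geF zu) in uz.
have [|S [Sw [Su no_between]]] := uctp w u.
  move=> T; split=> [[/above uT no_between]|-> //].
  case: (eqVneq T u) => // Tu; case: no_between; exists u.
  by split=> //; rewrite lt_neqAle eq_sym Tu uT.
apply: no_between; exists w; split=> //.
by rewrite lt_neqAle below // andbT; apply/eqP.
Qed.

Lemma induced_copy_le (d : Order.disp_t) (P : finPOrderType d) (n : nat)
    (f : P -> {set 'I_n}) :
  (forall u v : P, u <= v <-> f u \subset f v) ->
  forall u v, (u <= v) = (f u \subset f v).
Proof. by move=> ford u v; apply/idP/idP => /ford. Qed.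

Section OrderTwin.

Variables (d : Order.disp_t) (P : finPOrderType d) (n : nat).
Variables (F : {set {set 'I_n}}) (A0 G : {set 'I_n}).
Hypothesis A0F : A0 \in F.
Hypothesis A0_proper_G : A0 \proper G.
Hypothesis below_G : forall B, B \in F -> B \subset G -> B \subset A0.
Hypothesis above_A0 : forall B, B \in F -> A0 \proper B -> G \subset B.

Lemma twin_notin : G \notin F.
Proof.
apply/negP=> /below_G /(_ (subxx G)) GA0.
by move: A0_proper_G; rewrite properE GA0 andbF.
Qed.

Lemma twin_subset_below B : B \in G |: F -> B \subset G -> B != G -> B \subset A0.
Proof. by case/setU1P=> [-> _ /eqP|/below_G BA0 /BA0]. Qed.

Lemma twin_subset_above B : B \in G |: F -> A0 \subset B -> B != A0 -> G \subset B.
Proof.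
case/setU1P=> [->|BF A0B BA0]; first by rewrite subxx.
by apply: above_A0; rewrite // properEneq eq_sym BA0.
Qed.

Lemma twin_swap_copy (f : P -> {set 'I_n}) :
  injective f -> (forall u, f u \in G |: F) ->
  (forall u v, u <= v <-> f u \subset f v) ->
  (forall u, f u != A0) -> has_induced_copy P F.
Proof.
move=> finj fGF /induced_copy_le ford noA0.
have A0G := proper_sub A0_proper_G.
have fF u : f u != G -> f u \in F.
  by have := fGF u; case/setU1P=> [->|//]; rewrite eqxx.
exists (fun v => if f v == G then A0 else f v); split; [|split].
- move=> u v; case: (eqVneq (f u) G) => fuG; case: (eqVneq (f v) G) => fvG.
  + by move=> _; apply: finj; rewrite fuG fvG.
  + by move=> A0fv; case/eqP: (noA0 v).
  + by move=> fuA0; case/eqP: (noA0 u).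
  + exact: finj.
- by move=> u; case: (eqVneq (f u) G) => [_|/fF].
- move=> u v; rewrite ford.
  case: (eqVneq (f u) G) => fuG; case: (eqVneq (f v) G) => fvG.
  + by rewrite fuG fvG !subxx.
  + rewrite fuG; split=> [/(subset_trans A0G) //|A0fv].
    exact: twin_subset_above (fGF v) A0fv (noA0 v).
  + rewrite fvG; split=> [fuG'|/subset_trans]; last exact.
    exact: twin_subset_below (fGF u) fuG' fuG.
  + by [].
Qed.

Lemma twin_cover_copy (f : P -> {set 'I_n}) :
  UCTP P -> injective f -> (forall u, f u \in G |: F) ->
  (forall u v, u <= v <-> f u \subset f v) ->
  forall w u, f w = A0 -> f u = G -> False.
Proof.
move=> uctp finj fGF /induced_copy_le ford w u fw fu.
apply: (@UCTP_no_isolated_cover _ _ w u uctp).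
- rewrite lt_neqAle ford fw fu (proper_sub A0_proper_G) andbT.
  by apply/eqP=> wu; move: A0_proper_G; rewrite -fw -fu wu properxx.
- move=> z; rewrite lt_neqAle !ford fw fu => /andP[wz A0z].
  apply: twin_subset_above (fGF z) A0z _.
  by apply: contra wz; rewrite -fw => /eqP/finj->.
- move=> z; rewrite lt_neqAle !ford fw fu => /andP[zu zG].
  apply: twin_subset_below (fGF z) zG _.
  by apply: contra zu; rewrite -fu => /eqP/finj->.
Qed.

Lemma twin_extension_no_copy :
  UCTP P -> ~ has_induced_copy P F -> ~ has_induced_copy P (G |: F).
Proof.
move=> uctp noF [f [finj [fGF ford]]].
case: (pickP (fun w => f w == A0)) => [w /eqP fw|noA0]; last first.
  by apply: noF; apply: (twin_swap_copy finj fGF ford) => u; rewrite noA0.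
case: (pickP (fun u => f u == G)) => [u /eqP fu|noG].
  exact: (twin_cover_copy uctp finj fGF ford fw fu).
apply: noF; exists f; split=> //; split=> // u.
by case/setU1P: (fGF u) => // fuG; move: (noG u); rewrite /= fuG eqxx.
Qed.

End OrderTwin.

Section LargestAvoider.

Variables (n : nat) (F : {set {set 'I_n}}) (x y : 'I_n) (A0 : {set 'I_n}).
Hypothesis xy : x != y.
Hypothesis mem_xy : forall B, B \in F -> (x \in B) = (y \in B).
Hypothesis A0F : A0 \in F.
Hypothesis xA0 : x \notin A0.
Hypothesis A0_max : forall B, B \in F -> x \notin B -> (#|B| <= #|A0|)%N.

Lemma avoider_proper : A0 \proper x |: A0.
Proof. by rewrite properUr // sub1set. Qed.

Lemma avoider_below B : B \in F -> B \subset x |: A0 -> B \subset A0.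
Proof.
move=> BF BxA0; have yB : y \notin B.
  apply: contraTN BxA0 => yB; apply/subsetPn; exists y => //.
  by rewrite !inE eq_sym (negbTE xy) -(mem_xy A0F) (negbTE xA0).
apply/subsetP=> z zB; case/setU1P: (subsetP BxA0 z zB) => // zx.
by move: yB; rewrite -(mem_xy BF) -zx zB.
Qed.

Lemma avoider_above B : B \in F -> A0 \proper B -> x |: A0 \subset B.
Proof.
move=> BF A0B; rewrite subUset sub1set (proper_sub A0B) andbT.
apply: contraTT A0B => xB; rewrite properEcard negb_and orbC.
by rewrite -leqNgt A0_max.
Qed.

End LargestAvoider.

Theorem lemma3p8 (d : Order.disp_t) (P : finPOrderType d) (n : nat)
    (F : {set {set 'I_n}}) (x y : 'I_n) :
  (2 <= #|P|)%N -> UCTP P -> (3 <= n)%N -> induced_saturated P F ->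
  x != y ->
  (forall A, A \in F -> #|A :&: [set x; y]| <> 1%N) ->
  forall A, A \in F -> [set x; y] \subset A.
Proof.
move=> _ uctp _ [noF satF] xy card_xy A AF.
have mem_xy B : B \in F -> (x \in B) = (y \in B).
  by move=> BF; apply: mem_pair_eq_of_card_setI; apply: card_xy.
rewrite subUset !sub1set -(mem_xy _ AF) andbb; apply: contraT => xA.
pose avoids B := (B \in F) && (x \notin B).
have avoidA : avoids A by rewrite /avoids AF.
have [A0 /andP[A0F xA0] A0_max] := @arg_maxnP _ A avoids (fun B => #|B|) avoidA.
have A0_max' B : B \in F -> x \notin B -> (#|B| <= #|A0|)%N.
  by move=> BF xB; apply: A0_max; rewrite /avoids BF.
have below := avoider_below xy mem_xy A0F xA0.
have above := avoider_above A0_max'.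
have Gproper := avoider_proper xA0.
case: (twin_extension_no_copy A0F Gproper below above uctp noF); apply: satF.
by rewrite properUr // sub1set (twin_notin Gproper below).
Qed.
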